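(* Let $n$, $k$, $t$ be positive integers with $k\geq t+2$ and $n\geq 2k+1+\delta_{2,q}$. For positive integers $x$ define $$f(n,k,t,x)={x\brack t}{k-t+1\brack 1}^{x-t}{n-x\brack k-x}+{x\brack t}\sum_{i=0}^{x-t-1}{k-t+1\brack 1}^{i}.$$ Then $f(n,k,t,x)>f(n,k,t,x+1)$ for every $x\in\{t+1,\ldots,k-1\}$.
   Context: $q$ is a prime power and ${m\brack r}$ denotes the Gaussian binomial coefficient $\prod_{i=0}^{r-1}\frac{q^{m-i}-1}{q^{r-i}-1}$ (equal to $1$ for $r=0$). $\delta_{a,b}$ is the Kronecker delta. *)

From mathcomp Require Import all_boot all_order all_algebra.
Set Implicit Arguments. Unset Strict Implicit. Unset Printing Implicit Defensive.
Import Order.TTheory GRing.Theory Num.Theory.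
Local Open Scope ring_scope.

Definition prime_power (q : nat) : Prop :=
  exists p e : nat, [/\ prime p, (0 < e)%N & q = (p ^ e)%N].

(* Gaussian binomial [m brack r]_q = prod_{i=0}^{r-1} (q^{m-i}-1)/(q^{r-i}-1),
   computed in rat; equals 1 for r = 0.  (For m < r the factor i = m is 0.) *)
Definition qbin (q m r : nat) : rat :=
  \prod_(i < r) (((q%:R : rat) ^+ (m - i) - 1) / ((q%:R : rat) ^+ (r - i) - 1)).

Definition kdelta (a b : nat) : nat := if a == b then 1%N else 0%N.

Definition fval (q n k t x : nat) : rat :=
  qbin q x t * (qbin q (k - t + 1) 1) ^+ (x - t) * qbin q (n - x) (k - x)
  + qbin q x t * \sum_(i < x - t) (qbin q (k - t + 1) 1) ^+ i.

From mathcomp Require Import all_boot all_order all_algebra.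
From mathcomp Require Import ring lra zify.
Set Implicit Arguments. Unset Strict Implicit. Unset Printing Implicit Defensive.
Import Order.TTheory GRing.Theory Num.Theory.
Local Open Scope ring_scope.

(* Write [m] for q^m - 1.  Going from x to x + 1 multiplies [x brack t] by
   r = [x+1]/[x+1-t] and divides [n-x brack k-x] by rho = [n-x]/[k-x]; after
   cancelling [x brack t], f(x) > f(x+1) becomes
   P B rho + S > r (P a B + S + P), with a = [k-t+1]/[1], P = a^(x-t),
   S = sum_(i < x-t) a^i < P and B = [n-x-1 brack k-x-1] >= 1.
   As r is about q^t and a about q^(k-t), r (a + 2) <= q^(k+1+delta_(2,q))
   (for q = 2 the extra factor is needed to absorb the "+ 2"), which is at
   most q^(n-k) <= rho; then B >= 1 and S < P conclude. *)

Lemma prime_power_gt1 q : prime_power q -> (1 < q)%N.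
Proof.
case=> p [e [p_pr e_gt0 ->]].
apply: leq_trans (prime_gt1 p_pr) _; rewrite -{1}(expn1 p).
exact: leq_pexp2l (prime_gt0 p_pr) e_gt0.
Qed.

Lemma geom_sum_lt_expr (R : realDomainType) (a : R) n :
  2 <= a -> \sum_(i < n) a ^+ i < a ^+ n.
Proof.
move=> a_ge2; have S_ge0 : 0 <= \sum_(i < n) a ^+ i.
  by apply: sumr_ge0 => i _; apply: exprn_ge0; lra.
have := subrX1 a n; nra.
Qed.

Lemma geom_ratio_mul_le (R : realFieldType) (Q c u v w : R) :
  2 <= Q -> 0 <= u -> 4 <= v -> Q ^+ 3 <= w -> 2 <= c * (Q - 1) ->
  (u * v - 1) / (v - 1) * ((w - 1) / (Q - 1) + 2) <= c * (u * w).
Proof.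
move=> hQ hu hv hw hc.
have hv1 : 0 < v - 1 by lra.
have hQ1 : 0 < Q - 1 by lra.
rewrite -(ler_pM2r (mulr_gt0 hv1 hQ1)).
have -> : (u * v - 1) / (v - 1) * ((w - 1) / (Q - 1) + 2) * ((v - 1) * (Q - 1))
    = (u * v - 1) * (w + 2 * Q - 3) by field; lra.
have hw4 : 4 * Q - 6 <= w.
  have : Q ^+ 3 = Q * Q * Q by rewrite !exprS expr0 mulr1 mulrA.
  have : 0 <= (Q - 2) * (Q * Q + 2 * Q) by apply: mulr_ge0; nra.
  nra.
have hvw : v * (2 * Q - 3) + 2 * w <= v * w.
  have : 0 <= (v - 4) * (w - 2 * Q + 3) by apply: mulr_ge0; nra.
  nra.
have hcw : 2 * (u * ((v - 1) * w)) <= c * (u * w) * ((v - 1) * (Q - 1)).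
  have w_ge0 : 0 <= w by nra.
  have := ler_wpM2r (mulr_ge0 hu (mulr_ge0 (ltW hv1) w_ge0)) hc.
  lra.
have : u * (v * (2 * Q - 3) + 2 * w) <= u * (v * w) by apply: ler_wpM2l.
lra.
Qed.

Lemma fval_step_lt (R : realDomainType) (P S B r a rho : R) :
  0 <= S < P -> 1 <= B -> 0 < r -> r * (a + 2) <= rho ->
  r * (P * a * B + (S + P)) < P * (rho * B) + S.
Proof.
move=> /andP[S_ge0 SP] B_ge1 r_gt0 r_le.
have : P * B * (r * (a + 2)) <= P * B * rho by apply: ler_wpM2l => //; nra.
have : P * r <= P * r * B by rewrite -{1}[P * r]mulr1; apply: ler_wpM2l => //; nra.
nra.
Qed.

Section GaussianBinomial.

Variable q : nat.
Hypothesis q_gt1 : (1 < q)%N.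
Local Notation Q := (q%:R : rat).

Definition qratio m l : rat := (Q ^+ m - 1) / (Q ^+ l - 1).

Lemma Q_ge2 : 2 <= Q.
Proof. by rewrite (ler_nat rat 2 q). Qed.

Lemma expr_Q_ge1 l : 1 <= Q ^+ l.
Proof. by apply: exprn_ege1; have := Q_ge2; lra. Qed.

Lemma expr_Q_gt1 l : (0 < l)%N -> 1 < Q ^+ l.
Proof. by move=> l_gt0; rewrite exprn_egt1 -?lt0n //; have := Q_ge2; lra. Qed.

Lemma expr_Q_le m l : (l <= m)%N -> Q ^+ l <= Q ^+ m.
Proof. by move=> lm; rewrite ler_eXn2l //; have := Q_ge2; lra. Qed.

Lemma qratio_gt0 m l : (0 < l)%N -> (0 < m)%N -> 0 < qratio m l.
Proof.
by move=> l_gt0 m_gt0; apply: divr_gt0; rewrite subr_gt0; apply: expr_Q_gt1.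
Qed.

Lemma expr_le_qratio m l : (0 < l)%N -> (l <= m)%N -> Q ^+ (m - l) <= qratio m l.
Proof.
move=> l_gt0 lm; have hl := expr_Q_gt1 l_gt0.
rewrite ler_pdivlMr ?subr_gt0 // mulrBr mulr1 -exprD subnK //.
by have := expr_Q_ge1 (m - l); lra.
Qed.

Lemma qratio_mul_le t s m : (2 <= s)%N -> (3 <= m)%N ->
  qratio (t + s) s * (qratio m 1 + 2) <= Q ^+ kdelta 2 q * Q ^+ (t + m).
Proof.
move=> s_ge2 m_ge3; rewrite /qratio expr1 !exprD.
apply: geom_ratio_mul_le; first exact: Q_ge2.
- by apply: exprn_ge0; have := Q_ge2; lra.
- by apply: le_trans (expr_Q_le s_ge2); rewrite expr2; have := Q_ge2; nra.
- exact: expr_Q_le.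
rewrite /kdelta; case: eqP => [<- | q_neq2]; first by rewrite expr1; lra.
suff : 3 <= Q by rewrite expr0; lra.
by rewrite (ler_nat rat 3 q); lia.
Qed.

Lemma qbin_ge1 m r : (r <= m)%N -> 1 <= qbin q m r.
Proof.
move=> rm; apply: (big_ind (fun x => 1 <= x)) => // [x y|i _]; first exact: mulr_ege1.
have hr : 1 < Q ^+ (r - i) by apply: expr_Q_gt1; rewrite subn_gt0.
rewrite ler_pdivlMr ?subr_gt0 // mul1r lerD2r.
by apply: expr_Q_le; lia.
Qed.

Lemma qbin1 m : qbin q m 1 = qratio m 1.
Proof. by rewrite /qbin big_ord1 subn0 expr1. Qed.

Lemma qbin1_ge2 m : (1 < m)%N -> 2 <= qbin q m 1.
Proof.
move=> m_gt1; rewrite qbin1.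
have := expr_le_qratio (ltn0Sn 0) (ltnW m_gt1).
have : Q ^+ 1 <= Q ^+ (m - 1) by apply: expr_Q_le; lia.
by have := Q_ge2; rewrite expr1; lra.
Qed.

Lemma qbinSS m r : qbin q m.+1 r.+1 = qratio m.+1 r.+1 * qbin q m r.
Proof. by rewrite /qbin big_ord_recl /= !subn0. Qed.

Lemma qbinS m r : (r <= m)%N -> qbin q m.+1 r = qratio m.+1 (m.+1 - r) * qbin q m r.
Proof.
case: r => [_ | r rm].
  rewrite /qbin !big_ord0 mulr1 subn0 /qratio divff //.
  by have := expr_Q_gt1 (ltn0Sn m); lra.
have hd : Q ^+ (m - r) - 1 != 0.
  have : 1 < Q ^+ (m - r) by apply: expr_Q_gt1; rewrite subn_gt0.
  lra.
rewrite subSS /qratio; apply: (mulIf hd); rewrite [RHS]mulrAC divfK //.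
have numS : \prod_(i < r.+1) (Q ^+ (m.+1 - i) - 1)
    = (Q ^+ m.+1 - 1) * \prod_(i < r) (Q ^+ (m - i) - 1).
  by rewrite big_ord_recl subn0.
have numR : \prod_(i < r.+1) (Q ^+ (m - i) - 1)
    = \prod_(i < r) (Q ^+ (m - i) - 1) * (Q ^+ (m - r) - 1).
  by rewrite big_ord_recr.
by rewrite /qbin !prodf_div numS numR; ring.
Qed.

End GaussianBinomial.

Theorem lemma2p3 (q n k t : nat) :
  prime_power q -> (0 < n)%N -> (0 < k)%N -> (0 < t)%N ->
  (t + 2 <= k)%N -> (2 * k + 1 + kdelta 2 q <= n)%N ->
  forall x : nat, (t + 1 <= x)%N -> (x <= k - 1)%N ->
    fval q n k t x > fval q n k t (x + 1).
Proof.
move=> /prime_power_gt1 q_gt1 _ _ _ tk kn x tx xk; rewrite addn1.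
set a := qbin q (k - t + 1) 1; set G := qbin q x t.
set B := qbin q (n - x.+1) (k - x.+1).
set r := qratio q x.+1 (x.+1 - t); set rho := qratio q (n - x) (k - x).
set P := a ^+ (x - t); set S := \sum_(i < x - t) a ^+ i.
have fvalE : fval q n k t x = G * (P * (rho * B) + S).
  rewrite /fval -/a -/G -/P -/S mulrDr mulrA /rho /B.
  have [-> ->] : (n - x = (n - x.+1).+1 /\ k - x = (k - x.+1).+1)%N by lia.
  by rewrite qbinSS.
have fvalSE : fval q n k t x.+1 = G * (r * (P * a * B + (S + P))).
  rewrite /fval -/a -/B (qbinS q_gt1) -/r -/G; last by lia.
  have -> : (x.+1 - t = (x - t).+1)%N by lia.
  by rewrite exprSr big_ord_recr /= -/P -/S; ring.
have a_ge2 : 2 <= a by apply: qbin1_ge2 => //; lia.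
have r_bound : r * (a + 2) <= rho.
  have -> : r = qratio q (t + (x.+1 - t)) (x.+1 - t) by rewrite subnKC //; lia.
  rewrite /a qbin1; apply: le_trans (qratio_mul_le q_gt1 _ _ _) _; [lia|lia|].
  rewrite -exprD; apply: le_trans (expr_le_qratio q_gt1 _ _); [|lia|lia].
  apply: expr_Q_le; lia.
rewrite fvalE fvalSE ltr_pM2l; last by apply: lt_le_trans (qbin_ge1 q_gt1 _); [|lia].
apply: fval_step_lt => //.
- rewrite geom_sum_lt_expr // andbT; apply: sumr_ge0 => i _; apply: exprn_ge0; lra.
- apply: qbin_ge1 => //; lia.
- apply: qratio_gt0 => //; lia.
Qed.
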